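(* In the setting described in the context, let $(x_1,L_1),(x_2,L_2),(x_3,L_3)\in\mathcal E_\varphi$ with $x_1,x_2,x_3$ pairwise distinct and $L_1,L_2,L_3$ pairwise transverse. Then $\beta_n(L_1,L_2,L_3)=n\beta_1(x_1,x_2,x_3)$.
   Context: $V$ real symplectic of dimension $2n$, $\mathcal L(V)$ its Lagrangian Grassmannian, $\Gamma<\mathrm{PU}(1,1)$ a torsion-free cocompact lattice acting on $\mathbb S^1=\partial\mathcal D_{1,1}$, $\rho:\Gamma\to\mathrm{Sp}(V)$ a homomorphism, and $\varphi:\mathbb S^1\to\mathcal L(V)$ a $\rho$-equivariant measurable map such that (i) $\beta_n(\varphi(x),\varphi(y),\varphi(z))=n\beta_1(x,y,z)$ for Lebesgue-a.e. $(x,y,z)$, and (ii) for every $L\in\mathcal L(V)$ the set of $x$ with $\varphi(x)\cap L\neq0$ has Lebesgue measure zero. Here $\beta_n(L_1,L_2,L_3)$ is the signature of $(x_1,x_2,x_3)\mapsto\langle x_1,x_2\rangle+\langle x_2,x_3\rangle+\langle x_3,x_1\rangle$ on $L_1\oplus L_2\oplus L_3$, and $\beta_1(x,y,z)=\pm1$ for pairwise distinct positively/negatively cyclically ordered triples in $\mathbb S^1$, $0$ otherwise. The essential graph $\mathcal E_\varphi\subset\mathbb S^1\times\mathcal L(V)$ is the support of the pushforward of Lebesgue measure under $x\mapsto(x,\varphi(x))$. *)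

From HB Require Import structures.
From mathcomp Require Import all_boot all_order all_algebra.
From mathcomp Require Import all_classical all_reals all_analysis.
From mathcomp Require Import complex.

Set Implicit Arguments.
Unset Strict Implicit.
Unset Printing Implicit Defensive.

Import Order.TTheory GRing.Theory Num.Theory.
Local Open Scope ring_scope.
Local Open Scope classical_set_scope.

(* A point of S^1 is  pt t = e^{it}  (t : R, taken modulo 2 pi).        *)

Definition pt (R : realType) (t : R) : R[i] := (cos t +i* sin t)%C.

Definition cdist2 (R : realType) (z w : R[i]) : R :=
  let: Complex a b := (z - w)%R in a ^+ 2 + b ^+ 2.

Definition angmod (R : realType) (t : R) : R :=
  t - 2 * pi * (Num.floor (t / (2 * pi)))%:~R.

(* beta_1 (x,y,z) = +1 / -1 for pairwise distinct positively (counter-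
   clockwise) / negatively cyclically ordered triples, 0 otherwise.    *)
Definition beta1 (R : realType) (t1 t2 t3 : R) : int :=
  if [&& pt t1 != pt t2, pt t2 != pt t3 & pt t1 != pt t3] then
    (if angmod (t2 - t1) < angmod (t3 - t1) then 1 else -1)
  else 0.

(* PU(1,1) = SU(1,1)/{+-1} acting on S^1 by Moebius transformations.   *)
(* A subgroup Gamma < PU(1,1) is represented by its preimage G in       *)
(* SU(1,1) (a subgroup containing -1).                                 *)

Definition Jh (R : realType) : 'M[R[i]]_2 :=
  \matrix_(i < 2, j < 2) (if i == j then (if i == 0 then 1 else -1) else 0).

Definition adjc (R : realType) (g : 'M[R[i]]_2) : 'M[R[i]]_2 :=
  (map_mx (@conjc R) g)^T.

Definition SU11 (R : realType) (g : 'M[R[i]]_2) : Prop :=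
  adjc g *m Jh R *m g = Jh R /\ \det g = 1.

Definition mob (R : realType) (g : 'M[R[i]]_2) (z : R[i]) : R[i] :=
  (g 0 0 * z + g 0 1) / (g 1 0 * z + g 1 1).

Definition cmxdist2 (R : realType) (g h : 'M[R[i]]_2) : R :=
  \sum_(i < 2) \sum_(j < 2) cdist2 (g i j) (h i j).

Definition torsionfree_cocompact_lattice_PU11 (R : realType)
    (G : set 'M[R[i]]_2) : Prop :=
  (forall g, G g -> SU11 g) /\ G 1 /\ G (-1) /\
  (forall g h, G g -> G h -> G (g * h)) /\
  (forall g, G g -> G (invmx g)) /\
  (exists2 e : R, 0 < e & forall g, G g -> cmxdist2 g 1 < e -> g = 1) /\
  (forall g k, G g -> (0 < k)%N -> (g ^+ k = 1 \/ g ^+ k = -1) ->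
               g = 1 \/ g = -1) /\
  (* cocompact: SU(1,1) = G K with K a bounded (relatively compact) set *)
  (exists M : R, forall h, SU11 h ->
     exists g, exists k, [/\ G g, SU11 k, cmxdist2 k 0 <= M & h = g * k]).

Definition symplectic_form (R : realType) (n : nat) (Om : 'M[R]_(n + n)) : Prop :=
  Om^T = - Om /\ Om \in unitmx.

Definition omega (R : realType) (n : nat) (Om : 'M[R]_(n + n))
    (u v : 'rV[R]_(n + n)) : R := (u *m Om *m v^T) 0 0.

(* Sp(V): g acts on row vectors by u |-> u g^T *)
Definition Sp (R : realType) (n : nat) (Om : 'M[R]_(n + n)) (g : 'M[R]_(n + n)) : Prop :=
  g^T *m Om *m g = Om.

(* A Lagrangian L in L(V) is represented by the orthogonal projection P onto
   it (row space of P = L); the topology of L(V) is the one induced by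
   P |-> P (Grassmannian topology). *)
Definition lagproj (R : realType) (n : nat) (Om : 'M[R]_(n + n)) (P : 'M[R]_(n + n)) : Prop :=
  [/\ P^T = P, P *m P = P, \rank P = n & P *m Om *m P^T = 0].

Definition transverse (R : realType) (m : nat) (P Q : 'M[R]_m) : Prop :=
  \rank (P :&: Q)%MS = 0%N.

Definition mxdist (R : realType) (m : nat) (P Q : 'M[R]_m) : R :=
  \sum_(i < m) \sum_(j < m) `|P i j - Q i j|.

Definition posdef_on (R : realType) (N k : nat) (q : 'rV[R]_N -> R)
    (W : 'M[R]_N) (B : 'M[R]_(k, N)) : Prop :=
  [/\ row_free B, (B <= W)%MS &
      forall v : 'rV[R]_k, v != 0 -> 0 < q (v *m B)].

Definition posidx (R : realType) (N : nat) (q : 'rV[R]_N -> R) (W : 'M[R]_N) : nat :=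
  (\max_(k < N.+1 | `[< exists B : 'M[R]_(k, N), posdef_on q W B >]) k)%N.

Definition signature (R : realType) (N : nat) (q : 'rV[R]_N -> R) (W : 'M[R]_N) : int :=
  (posidx q W)%:Z - (posidx (fun v => - q v) W)%:Z.

Definition maslov_form (R : realType) (n : nat) (Om : 'M[R]_(n + n))
    (w : 'rV[R]_((n + n) + ((n + n) + (n + n)))) : R :=
  let x1 := lsubmx w in
  let x2 := lsubmx (rsubmx w) in
  let x3 := rsubmx (rsubmx w) in
  omega Om x1 x2 + omega Om x2 x3 + omega Om x3 x1.

Definition betan (R : realType) (n : nat) (Om : 'M[R]_(n + n))
    (P1 P2 P3 : 'M[R]_(n + n)) : int :=
  signature (maslov_form Om) (block_mx P1 0 0 (block_mx P2 0 0 P3)).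

Definition lam (R : realType) := @lebesgue_measure R.
Arguments lam R : clear implicits.

(* phi : S^1 -> L(V), given as a 2pi-periodic function of the angle *)
Definition measurable_lagmap (R : realType) (m : nat) (phi : R -> 'M[R]_m) : Prop :=
  forall i j, measurable_fun setT (fun t : R => phi t i j).

(* (x, L) belongs to the essential graph of phi, i.e. to the support of
   the push-forward of Lebesgue measure under x |-> (x, phi x) *)
Definition in_essgraph (R : realType) (m : nat) (phi : R -> 'M[R]_m)
    (t0 : R) (P : 'M[R]_m) : Prop :=
  forall e : R, 0 < e ->
    (0 < lam R [set t | (cdist2 (pt t) (pt t0) < e)%R /\ (mxdist (phi t) P < e)%R])%E.

(* For pairwise transverse Lagrangians this form is nondegenerate: a radical vector
   (x1, x2, x3) has x2 - x3 in L1, x3 - x1 in L2 and x1 - x2 in L3, which forces it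
   to vanish. The positive and negative indices of a form are lower semicontinuous in
   the subspace and, for a nondegenerate form, add up to its dimension, so [betan] is
   constant near (L1, L2, L3). Likewise [beta1] is the sign of
   sin (t2 - t1) + sin (t3 - t2) + sin (t1 - t3), which is continuous and nonzero at
   distinct points. As the (t_i, L_i) lie in the essential graph, a product of small
   neighbourhoods of them has positive measure and so contains a triple (s1, s2, s3)
   where (i) holds for (phi s1, phi s2, phi s3); both sides of the identity agree
   there with their values at (t_i, L_i). *)

From Pilot Require Import Defs.
From HB Require Import structures.
From mathcomp Require Import all_boot all_order all_algebra.
From mathcomp Require Import all_classical all_reals all_analysis.
From mathcomp Require Import complex measurable_realfun.
From mathcomp Require Import ring lra zify.
Import Order.TTheory GRing.Theory Num.Theory numFieldNormedType.Exports.
Local Open Scope ring_scope.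
Local Open Scope classical_set_scope.
Set Implicit Arguments.
Unset Strict Implicit.
Unset Printing Implicit Defensive.

(** * Indices of quadratic forms *)

Section QuadraticForm.
Variables (R : realType) (N : nat).
Implicit Types (S : 'M[R]_N) (u v w : 'rV[R]_N).

Definition qf S v := (v *m S *m v^T) 0 0.
Definition bf S u v := (u *m (S + S^T) *m v^T) 0 0.

Lemma bilinear_trmx (m : nat) (u : 'rV[R]_m) (M : 'M[R]_m) (v : 'rV[R]_m) :
  (u *m M *m v^T) 0 0 = (v *m M^T *m u^T) 0 0.
Proof.
transitivity ((u *m M *m v^T)^T 0 0); first by rewrite [RHS]mxE.
by rewrite !trmx_mul trmxK mulmxA.
Qed.

Lemma bfC S u v : bf S u v = bf S v u.
Proof. by rewrite /bf bilinear_trmx linearD /= trmxK addrC. Qed.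

Lemma bfE S u v : bf S u v = (u *m S *m v^T) 0 0 + (v *m S *m u^T) 0 0.
Proof. by rewrite /bf mulmxDr mulmxDl mxE [X in _ + X]bilinear_trmx trmxK. Qed.

Lemma qfD S u v : qf S (u + v) = qf S u + qf S v + bf S u v.
Proof. by rewrite bfE /qf linearD /= !mulmxDl !mulmxDr !mxE; ring. Qed.

Lemma qfZ S a v : qf S (a *: v) = a ^+ 2 * qf S v.
Proof. by rewrite /qf linearZ /= -!scalemxAl -scalemxAr !mxE mulrA expr2. Qed.

Lemma qfN S v : qf S (- v) = qf S v.
Proof. by rewrite -scaleN1r qfZ sqrrN expr1n mul1r. Qed.

Lemma qf0 S : qf S 0 = 0.
Proof. by rewrite /qf !mul0mx mxE. Qed.

Lemma qfNS S : qf (- S) = (fun v => - qf S v).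
Proof. by apply/funext => v; rewrite /qf mulmxN mulNmx mxE. Qed.

Lemma bfDr S u v1 v2 : bf S u (v1 + v2) = bf S u v1 + bf S u v2.
Proof. by rewrite /bf [(v1 + v2)^T]linearD mulmxDr mxE. Qed.

Lemma bfZr S a u v : bf S u (a *: v) = a * bf S u v.
Proof. by rewrite /bf linearZ /= -scalemxAr mxE. Qed.

Lemma bfvv S v : bf S v v = 2 * qf S v.
Proof. by rewrite bfE /qf; ring. Qed.

End QuadraticForm.

Lemma qf_mul (R : realType) (N k : nat) (S : 'M[R]_N) (B : 'M[R]_(k, N))
    (v : 'rV[R]_k) :
  qf S (v *m B) = qf (B *m S *m B^T) v.
Proof. by rewrite /qf trmx_mul !mulmxA. Qed.

Section PositiveIndex.
Variables (R : realType) (N : nat).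
Implicit Types (q : 'rV[R]_N -> R) (S W : 'M[R]_N).

Lemma posdef_onP q W k (B : 'M[R]_(k, N)) :
  q 0 = 0 -> (B <= W)%MS -> (forall v : 'rV_k, v != 0 -> 0 < q (v *m B)) ->
  posdef_on q W B.
Proof.
move=> q0 BW qB; split => //; apply: inj_row_free => v vB.
by apply/eqP; apply/negP => /negP /qB; rewrite vB q0 ltxx.
Qed.

Lemma posidx_ge q W k (B : 'M[R]_(k, N)) : posdef_on q W B -> (k <= posidx q W)%N.
Proof.
move=> pB; have kN : (k < N.+1)%N.
  by case: pB => /eqP rB _ _; rewrite ltnS -rB rank_leq_col.
apply: (@leq_bigmax_cond _ _ (fun i : 'I_N.+1 => nat_of_ord i) (Ordinal kN)).
by apply/asboolP; exists B.
Qed.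

Lemma posidx_witness q W :
  q 0 = 0 -> exists B : 'M[R]_(posidx q W, N), posdef_on q W B.
Proof.
move=> q0; rewrite /posidx.
set P := (fun k : 'I_N.+1 => `[< exists B : 'M[R]_(k, N), posdef_on q W B >]).
have P0 : P ord0.
  apply/asboolP; exists 0; apply: posdef_onP => //; first by rewrite sub0mx.
  by move=> v; rewrite thinmx0 eqxx.
have /(@eq_bigmax_cond _ _ (fun i : 'I_N.+1 => nat_of_ord i)) [i Pi ->] :
  (0 < #|P|)%N by apply/card_gt0P; exists ord0.
by move: Pi; rewrite unfold_in => /asboolP.
Qed.

Lemma posidx_negidx_le_rank S W :
  (posidx (qf S) W + posidx (qf (- S)) W <= \rank W)%N.
Proof.
rewrite qfNS.
have [B1 [_ sB1 pB1]] := posidx_witness W (qf0 S).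
have nq0 : (fun v => - qf S v) 0 = 0 by rewrite /= qf0 oppr0.
have [B2 [_ sB2 pB2]] := @posidx_witness (fun v => - qf S v) W nq0.
suff /eqP <- : row_free (col_mx B1 B2) by apply: mxrankS; rewrite col_mx_sub sB1 sB2.
apply: inj_row_free => v; rewrite -{1}(hsubmxK v) mul_row_col => /eqP.
rewrite addr_eq0 => /eqP v12.
have le0 : qf S (rsubmx v *m B2) <= 0.
  have [->|nz] := eqVneq (rsubmx v) 0; first by rewrite mul0mx qf0.
  by rewrite -oppr_ge0 ltW ?pB2.
have l0 : lsubmx v = 0.
  by apply/eqP; apply/negP => /negP /pB1; rewrite v12 qfN ltNge le0.
have r0 : rsubmx v = 0.
  by apply/eqP; apply/negP => /negP /pB2; rewrite -qfN -v12 l0 mul0mx qf0 oppr0 ltxx.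
by rewrite -(hsubmxK v) l0 r0 row_mx0.
Qed.

End PositiveIndex.

Section Nondegenerate.
Variables (R : realType) (N : nat).
Implicit Types (S C W : 'M[R]_N) (u w : 'rV[R]_N).

Definition nondeg_on S W := forall w, (w <= W)%MS ->
  (forall w', (w' <= W)%MS -> bf S w w' = 0) -> w = 0.

(* Isotropic vectors of a negative semidefinite form lie in its radical: otherwise
   [qf S] would be positive at [w + c u] with [c = bf S w u / (1 - qf S u)]. *)
Lemma nsd_isotropic_orthogonal S C w u :
  (forall x, (x <= C)%MS -> qf S x <= 0) ->
  (w <= C)%MS -> qf S w = 0 -> (u <= C)%MS -> bf S w u = 0.
Proof.
move=> nsd wC qw uC; apply/eqP/negP => /negP bnz.
set b := bf S w u; set a := qf S u.
have a0 : a <= 0 by exact: nsd.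
have a1 : 0 < 1 - a by rewrite subr_gt0; apply: le_lt_trans a0 _.
have := nsd (w + (b / (1 - a)) *: u) (addmx_sub wC (scalemx_sub _ uC)).
rewrite qfD qw add0r qfZ bfZr -/a -/b.
have -> : (b / (1 - a)) ^+ 2 * a + b / (1 - a) * b = b ^+ 2 / (1 - a) ^+ 2.
  by field; rewrite gt_eqF.
rewrite leNgt => /negP; apply; apply: divr_gt0; last by rewrite exprn_gt0.
by rewrite lt_def sqr_ge0 andbT sqrf_eq0.
Qed.

Lemma posdef_gram_unit k S (P : 'M[R]_(k, N)) :
  (forall v : 'rV_k, v != 0 -> 0 < qf S (v *m P)) ->
  P *m (S + S^T) *m P^T \in unitmx.
Proof.
move=> posP; rewrite -row_free_unit; apply: inj_row_free => v vG.
have : bf S (v *m P) (v *m P) = 0.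
  by rewrite /bf trmx_mul !mulmxA -(mulmxA v P) -(mulmxA v) vG mul0mx mxE.
rewrite bfvv => /eqP; rewrite mulf_eq0 pnatr_eq0 /= => /eqP.
by apply: contra_eq => /posP /gt_eqF/negbT; rewrite eq_sym.
Qed.

Lemma mul_row_col1 k (v : 'rV[R]_(k + 1)) (P : 'M[R]_(k, N)) w :
  v *m col_mx P w = lsubmx v *m P + rsubmx v 0 0 *: w.
Proof.
rewrite -{1}(hsubmxK v) mul_row_col; congr (_ + _).
by rewrite {1}[rsubmx v]mx11_scalar mul_scalar_mx.
Qed.

End Nondegenerate.

(* Sylvester's argument: in [W], the [bf S]-orthogonal of a maximal positive definite
   subspace is negative definite. *)
Section MaximalPositiveSubspace.
Variables (R : realType) (N p : nat) (S W : 'M[R]_N) (P : 'M[R]_(p, N)).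
Hypotheses (sPW : (P <= W)%MS)
  (posP : forall v : 'rV_p, v != 0 -> 0 < qf S (v *m P))
  (maxP : (posidx (qf S) W <= p)%N).

Let perp := (W :&: kermx ((S + S^T) *m P^T))%MS.

Let perp_sub (w : 'rV[R]_N) : (w <= perp)%MS -> (w <= W)%MS.
Proof. by rewrite sub_capmx => /andP []. Qed.

Lemma bf_perp (w : 'rV[R]_N) (v : 'rV_p) : (w <= perp)%MS -> bf S w (v *m P) = 0.
Proof.
rewrite sub_capmx => /andP [_ /sub_kermxP wK].
by rewrite /bf trmx_mul mulmxA -(mulmxA w) wK mul0mx mxE.
Qed.

Lemma qf_perp_le0 (w : 'rV[R]_N) : (w <= perp)%MS -> qf S w <= 0.
Proof.
move=> wC; rewrite leNgt; apply/negP => qw.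
suff /posidx_ge : posdef_on (qf S) W (col_mx P w) by rewrite addn1 ltnNge maxP.
apply: posdef_onP; [exact: qf0 | by rewrite col_mx_sub sPW perp_sub |].
move=> v vnz; rewrite mul_row_col1 qfD qfZ bfZr bfC bf_perp // mulr0 addr0.
have [l0|lnz] := eqVneq (lsubmx v) 0; last first.
  by rewrite ltr_wpDr ?posP // mulr_ge0 ?sqr_ge0 ?ltW.
rewrite l0 mul0mx qf0 add0r mulr_gt0 // lt_def sqr_ge0 andbT sqrf_eq0.
apply: contra vnz => /eqP c0; rewrite -(hsubmxK v) l0.
suff -> : rsubmx v = 0 by rewrite row_mx0.
by apply/matrixP => i j; rewrite !ord1 c0 mxE.
Qed.

Hypothesis nondegW : nondeg_on S W.

Lemma qf_perp_lt0 (w : 'rV[R]_N) : (w <= perp)%MS -> w != 0 -> qf S w < 0.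
Proof.
move=> wC wnz; rewrite lt_def qf_perp_le0 // andbT.
apply: contra wnz => /eqP/esym qw; apply/eqP/nondegW; first exact: perp_sub.
move=> x xW; set G := P *m (S + S^T) *m P^T.
set y := x *m (S + S^T) *m P^T *m invmx G.
have xyC : (x - y *m P <= perp)%MS.
  rewrite sub_capmx; apply/andP; split.
    by rewrite addmx_sub // -mulNmx (submx_trans (submxMl _ _) sPW).
  apply/sub_kermxP; rewrite mulmxBl /y -!mulmxA (mulmxA P) (mulmxA _ _ P^T).
  by rewrite -/G mulVmx ?posdef_gram_unit // mulmx1 !mulmxA subrr.
rewrite -(subrK (y *m P) x) bfDr bf_perp // addr0.
exact: nsd_isotropic_orthogonal qf_perp_le0 wC qw xyC.
Qed.

Lemma rank_perp : (\rank W - p <= \rank perp)%N.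
Proof.
rewrite /perp; have := mxrank_sum_cap W (kermx ((S + S^T) *m P^T)).
have := rank_leq_col (W + kermx ((S + S^T) *m P^T))%MS.
have := rank_leq_col ((S + S^T) *m P^T).
rewrite mxrank_ker; lia.
Qed.

Lemma rank_le_posidx_add_negidx : (\rank W <= p + posidx (qf (- S)) W)%N.
Proof.
suff : (\rank perp <= posidx (qf (- S)) W)%N by have := rank_perp; lia.
apply: posidx_ge (row_base perp) _; apply: posdef_onP; first exact: qf0.
  by rewrite eq_row_base capmxSl.
move=> v vnz; rewrite qfNS oppr_gt0 qf_perp_lt0 //.
  by rewrite (submx_trans (submxMl _ _)) ?eq_row_base.
apply: contra vnz => /eqP vB0; apply/eqP/(row_free_inj (row_base_free perp)).
by rewrite vB0 mul0mx.
Qed.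

End MaximalPositiveSubspace.

Lemma posidx_negidx_ge_rank (R : realType) (N : nat) (S W : 'M[R]_N) :
  nondeg_on S W -> (\rank W <= posidx (qf S) W + posidx (qf (- S)) W)%N.
Proof.
have [P [_ sPW posP]] := posidx_witness W (qf0 S).
exact: rank_le_posidx_add_negidx sPW posP (leqnn _).
Qed.

(** * Norm estimates and semicontinuity *)

Section Norms.
Variable R : realType.

Definition l1norm m n (M : 'M[R]_(m, n)) := \sum_i \sum_j `|M i j|.

Lemma l1norm_ge0 m n (M : 'M[R]_(m, n)) : 0 <= l1norm M.
Proof. by apply: sumr_ge0 => i _; apply: sumr_ge0. Qed.

Lemma mxdistE m (P Q : 'M[R]_m) : mxdist P Q = l1norm (P - Q).
Proof. by apply: eq_bigr => i _; apply: eq_bigr => j _; rewrite !mxE. Qed.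

Lemma l1norm_diag_block m1 m2 (A : 'M[R]_m1) (B : 'M[R]_m2) :
  l1norm (block_mx A 0 0 B) = l1norm A + l1norm B.
Proof.
rewrite /l1norm big_split_ord /=; congr (_ + _); apply: eq_bigr => i _.
  rewrite big_split_ord /= [X in _ + X]big1 ?addr0 => [|j _].
    by apply: eq_bigr => j _; rewrite block_mxEul.
  by rewrite block_mxEur mxE normr0.
rewrite big_split_ord /= [X in X + _]big1 ?add0r => [|j _].
  by apply: eq_bigr => j _; rewrite block_mxEdr.
by rewrite block_mxEdl mxE normr0.
Qed.

Lemma normr_mx_entry m n (x : 'M[R]_(m, n)) i j : `|x i j| <= `|x|.
Proof.
rewrite [`|x|]mx_normrE.
exact: (le_bigmax _ (fun ij : 'I_m * 'I_n => `|x ij.1 ij.2|) (i, j)).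
Qed.

Lemma normr_mx_le m n (x : 'M[R]_(m, n)) c :
  0 <= c -> (forall i j, `|x i j| <= c) -> `|x| <= c.
Proof.
by move=> c0 xc; rewrite [`|x|]mx_normrE; apply: bigmax_le => // ij _; apply: xc.
Qed.

Lemma normr_mulmx_le m n (u : 'rV[R]_m) (M : 'M[R]_(m, n)) :
  `|u *m M| <= `|u| * l1norm M.
Proof.
apply: normr_mx_le => [|i j]; first by rewrite mulr_ge0 ?l1norm_ge0.
rewrite mxE; apply: le_trans (ler_norm_sum _ _ _) _.
rewrite /l1norm mulr_sumr; apply: ler_sum => k _; rewrite normrM.
apply: ler_pM => //; first exact: normr_mx_entry.
by rewrite (bigD1 j) //= lerDl sumr_ge0.
Qed.

Lemma normr_bilinear_le m (u : 'rV[R]_m) (M : 'M[R]_m) (w : 'rV[R]_m) :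
  `|(u *m M *m w^T) 0 0| <= `|u| * `|w| * l1norm M.
Proof.
rewrite -mulmxA mxE; apply: le_trans (ler_norm_sum _ _ _) _.
rewrite /l1norm mulr_sumr; apply: ler_sum => i _.
rewrite normrM -mulrA; apply: ler_pM => //; first exact: normr_mx_entry.
rewrite mxE; apply: le_trans (ler_norm_sum _ _ _) _.
rewrite mulr_sumr; apply: ler_sum => j _.
by rewrite !mxE normrM [X in _ <= X]mulrC ler_wpM2l // normr_mx_entry.
Qed.

Lemma qf_dist_le k (M : 'M[R]_k) (v y : 'rV[R]_k) :
  `|qf M v - qf M y| <=
    `|v - y| * (`|v - y| + `|y|) * (l1norm M + l1norm (M + M^T)).
Proof.
have -> : qf M v - qf M y = qf M (v - y) + bf M (v - y) y.
  by rewrite -[X in qf M X - _](subrK y v) (qfD _ (v - y)); ring.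
apply: le_trans (ler_normD _ _) _.
apply: le_trans (lerD (normr_bilinear_le _ _ _) (normr_bilinear_le _ _ _)) _.
set a := `|v - y|; set b := `|y|.
rewrite -subr_ge0 (_ : _ - _ = a * a * l1norm (M + M^T) + a * b * l1norm M); last by ring.
by apply: addr_ge0; rewrite !mulr_ge0 ?l1norm_ge0 ?normr_ge0.
Qed.

Lemma qf_continuous k (M : 'M[R]_k) : continuous (qf M).
Proof.
move=> v; apply/(@cvgrPdist_lt _ _ _ _ (nbhs_filter v)) => e e0.
set K := l1norm M + l1norm (M + M^T).
have K0 : 0 <= K by rewrite addr_ge0 ?l1norm_ge0.
have hK : 0 < (1 + `|v|) * K + 1 by rewrite ltr_wpDl // mulr_ge0.
set d := Num.min 1 (e / ((1 + `|v|) * K + 1)).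
have d0 : 0 < d by rewrite lt_min ltr01 divr_gt0.
have : \forall y \near v, `|v - y| < d.
  by apply: (@cvgr_dist_lt _ _ _ _ (nbhs_filter v) id v) => //; exact: cvg_id.
apply: filterS => y yv; rewrite distrC; rewrite distrC in yv.
apply: le_lt_trans (qf_dist_le M y v) _.
apply: (@le_lt_trans _ _ (d * (1 + `|v|) * K)).
  apply: ler_wpM2r => //; apply: ler_pM; rewrite ?addr_ge0 //; first exact: ltW.
  by rewrite lerD2r (le_trans (ltW yv)) // ge_min lexx.
apply: (@le_lt_trans _ _ (e / ((1 + `|v|) * K + 1) * ((1 + `|v|) * K))).
  by rewrite -mulrA ler_wpM2r // ?ge_min ?lexx ?orbT // mulr_ge0 // addr_ge0.
rewrite mulrAC ltr_pdivrMr // ltr_pM2l //; lra.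
Qed.

Lemma qf_coercive k (M : 'M[R]_k) :
  (forall v : 'rV_k, v != 0 -> 0 < qf M v) ->
  exists2 c, 0 < c & forall v : 'rV_k, c * `|v| ^+ 2 <= qf M v.
Proof.
case: k M => [|k] M posM.
  by exists 1 => // v; rewrite [v]thinmx0 normr0 expr0n /= mulr0 qf0.
set K := [set v : 'rV[R]_k.+1 | `|v| = 1].
have K1 : K (const_mx 1).
  apply/eqP; rewrite eq_le normr_mx_le => [|//|i j]; last by rewrite mxE normr1.
  by have := normr_mx_entry (const_mx 1 : 'rV[R]_k.+1) 0 0; rewrite mxE normr1.
have cK : compact K.
  apply: bounded_closed_compact.
    by exists 1; split => // x x1 y; rewrite /K /= => ->; apply: ltW.
  apply: (@preimage_closed _ _ (fun v : 'rV[R]_k.+1 => `|v|) [set 1]) => [x _|].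
    exact: norm_continuous.
  exact: closed_eq.
have [v0 v0K minv] :=
  EVT_min_rV (ex_intro _ _ K1) cK (continuous_subspaceT (@qf_continuous _ M)).
have v0nz : v0 != 0.
  by move: v0K; rewrite inE; apply: contraPneq => ->; rewrite /K /= normr0 => /esym/eqP; rewrite oner_eq0.
exists (qf M v0); first exact: posM.
move=> v; have [->|vnz] := eqVneq v 0; first by rewrite normr0 expr0n /= mulr0 qf0.
have nv0 : 0 < `|v| by rewrite normr_gt0.
have /minv : `|v|^-1 *: v \in K.
  by rewrite inE /K /= normrZ normfV normr_id mulVf ?gt_eqF.
have -> : qf M v = `|v| ^+ 2 * (`|v|^-1 ^+ 2 * qf M v).
  by rewrite mulrA -exprMn divff ?expr1n ?mul1r // gt_eqF.
by rewrite qfZ => h; rewrite mulrC ler_wpM2l // sqr_ge0.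
Qed.

End Norms.

Section IndexSemicontinuity.
Variables (R : realType) (N : nat).

Lemma qf_pos_perturb k (S : 'M[R]_N) (B : 'M[R]_(k, N)) (E : 'M[R]_N) c :
  (forall v : 'rV_k, c * `|v| ^+ 2 <= qf S (v *m B)) -> l1norm E <= 1 ->
  2 * l1norm B ^+ 2 * (l1norm S + l1norm (S + S^T)) * l1norm E < c ->
  forall v : 'rV_k, v != 0 -> 0 < qf S (v *m B + v *m B *m E).
Proof.
move=> cB E1 Ec v vnz.
set u := v *m B; set e := u *m E; set b := l1norm B in Ec *.
set K := l1norm S + l1norm (S + S^T) in Ec *; set dl := l1norm E in E1 Ec *.
have K0 : 0 <= K by rewrite addr_ge0 ?l1norm_ge0.
have a0 : 0 < `|v| by rewrite normr_gt0.
have hu : `|u| <= `|v| * b := normr_mulmx_le v B.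
have he : `|e| <= `|v| * b * dl.
  exact: le_trans (normr_mulmx_le u E) (ler_wpM2r (l1norm_ge0 E) hu).
have he1 : `|e| <= `|v| * b.
  by apply: le_trans he _; rewrite ler_piMr // mulr_ge0 ?l1norm_ge0.
have hdist : `|qf S (u + e) - qf S u| <= `|v| ^+ 2 * (2 * b ^+ 2 * K * dl).
  apply: le_trans (qf_dist_le S (u + e) u) _; rewrite addrAC subrr add0r.
  apply: (@le_trans _ _ (`|v| * b * dl * (2 * (`|v| * b)) * K)).
    by rewrite ler_wpM2r // ler_pM ?addr_ge0 // mulr2n mulrDl mul1r lerD.
  by rewrite le_eqVlt; apply/orP; left; apply/eqP; ring.
have hc := cB v.
have : `|v| ^+ 2 * (2 * b ^+ 2 * K * dl) < `|v| ^+ 2 * c by rewrite ltr_pM2l ?exprn_gt0.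
have := ler_norm (qf S u - qf S (u + e)); rewrite distrC.
nra.
Qed.

Lemma posidx_lsc (S W : 'M[R]_N) : W *m W = W ->
  exists2 d : R, 0 < d & forall X : 'M[R]_N, l1norm (X - W) < d ->
    (posidx (qf S) W <= posidx (qf S) X)%N.
Proof.
move=> WW; have [B [_ sBW posB]] := posidx_witness W (qf0 S).
have BW : B *m W = B by case/submxP: sBW => D ->; rewrite -mulmxA WW.
have [c c0 cB] : exists2 c, 0 < c & forall v, c * `|v| ^+ 2 <= qf S (v *m B).
  have [|c c0 cB] := @qf_coercive _ _ (B *m S *m B^T).
    by move=> v vnz; rewrite -qf_mul posB.
  by exists c => // v; rewrite qf_mul.
set K := l1norm S + l1norm (S + S^T); set D := 2 * l1norm B ^+ 2 * K + 1.
have D0 : 0 < D by rewrite ltr_wpDl // !mulr_ge0 ?sqr_ge0 ?addr_ge0 ?l1norm_ge0.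
exists (Num.min 1 (c / D)); first by rewrite lt_min ltr01 divr_gt0.
move=> X; rewrite lt_min => /andP [X1 Xc].
apply: (@posidx_ge _ _ _ _ _ (B *m X)); apply: posdef_onP; [exact: qf0 | exact: submxMl |].
move=> v vnz; have -> : v *m (B *m X) = v *m B + v *m B *m (X - W).
  by rewrite mulmxBr -(mulmxA v B W) BW addrC subrK mulmxA.
apply: qf_pos_perturb => //; first exact: ltW.
rewrite ltr_pdivlMr // in Xc; apply: le_lt_trans Xc.
by rewrite mulrC ler_wpM2l ?l1norm_ge0 // lerDl.
Qed.

Lemma signature_locally_constant (S W : 'M[R]_N) :
  W *m W = W -> nondeg_on S W ->
  exists2 d : R, 0 < d & forall X : 'M[R]_N, l1norm (X - W) < d ->
    (\rank X <= \rank W)%N -> signature (qf S) X = signature (qf S) W.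
Proof.
move=> WW ndW.
have [d1 d10 lsc1] := posidx_lsc S WW; have [d2 d20 lsc2] := posidx_lsc (- S) WW.
exists (Num.min d1 d2); first by rewrite lt_min d10 d20.
move=> X; rewrite lt_min => /andP [/lsc1 pos /lsc2 neg] rX.
have := posidx_negidx_le_rank S X; have := posidx_negidx_ge_rank ndW.
rewrite /signature -qfNS => ge le.
by congr (_ - _); congr Posz; lia.
Qed.

End IndexSemicontinuity.

(** * The Maslov form *)

Section Symplectic.
Variables (R : realType) (n : nat) (Om : 'M[R]_(n + n)).
Hypothesis OmT : Om^T = - Om.
Local Notation m := (n + n).
Implicit Types (x y u : 'rV[R]_m) (L : 'M[R]_m).

Lemma omega0r x : omega Om x 0 = 0.
Proof. by rewrite /omega trmx0 mulmx0 mxE. Qed.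

Lemma omega0l x : omega Om 0 x = 0.
Proof. by rewrite /omega !mul0mx mxE. Qed.

Lemma omegaBr x y u : omega Om x (y - u) = omega Om x y - omega Om x u.
Proof. by rewrite /omega linearB /= mulmxBr !mxE. Qed.

Lemma omegaC x y : omega Om x y = - omega Om y x.
Proof. by rewrite /omega bilinear_trmx OmT mulmxN mulNmx mxE. Qed.

Hypothesis Om_unit : Om \in unitmx.

(* A Lagrangian is its own symplectic orthogonal: it is contained in the kernel of
   [u |-> (L Om u^T)], which has dimension [2n - n = n]. *)
Lemma lagrangian_omega_orthogonal L u : lagproj Om L ->
  (forall y, (y <= L)%MS -> omega Om y u = 0) -> (u <= L)%MS.
Proof.
move=> [LT LL rL LO] Lu; set K := kermx ((L *m Om)^T).
have uK : (u <= K)%MS.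
  apply/sub_kermxP; apply: trmx_inj; rewrite trmx_mul trmxK trmx0.
  apply/matrixP => i j; rewrite ord1 [RHS]mxE.
  transitivity ((row i (L *m Om *m u^T)) 0 0); first by rewrite [RHS]mxE.
  by rewrite !row_mul; exact: Lu (row i L) (row_sub i L).
have LK : (L <= K)%MS.
  by apply/sub_kermxP; rewrite trmx_mul OmT mulNmx mulmxN mulmxA LO oppr0.
have rK : \rank K = \rank L.
  by rewrite mxrank_ker mxrank_tr mxrankMfree ?row_free_unit // rL; lia.
have [_] := mxrank_leqif_sup LK; rewrite rK eqxx => /esym KL.
exact: submx_trans uK KL.
Qed.

End Symplectic.

Section DiagonalBlocks.
Variable R : realType.

Lemma mul_row_diag_block m1 m2 n1 n2 (x : 'rV[R]_m1) (y : 'rV[R]_m2)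
    (A : 'M[R]_(m1, n1)) (B : 'M[R]_(m2, n2)) :
  row_mx x y *m block_mx A 0 0 B = row_mx (x *m A) (y *m B).
Proof. by rewrite mul_row_block !mulmx0 addr0 add0r. Qed.

Lemma mul_diag_block m1 m2 (A A' : 'M[R]_m1) (B B' : 'M[R]_m2) :
  block_mx A 0 0 B *m block_mx A' 0 0 B' = block_mx (A *m A') 0 0 (B *m B').
Proof. by rewrite mulmx_block !mulmx0 !mul0mx !addr0 !add0r. Qed.

Lemma row_mx_sub_diag_block m1 m2 (x : 'rV[R]_m1) (y : 'rV[R]_m2)
    (A : 'M[R]_m1) (B : 'M[R]_m2) :
  (row_mx x y <= block_mx A 0 0 B)%MS = (x <= A)%MS && (y <= B)%MS.
Proof.
apply/idP/andP => [/submxP [D] | [/submxP [Dx ->] /submxP [Dy ->]]].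
  rewrite -(hsubmxK D) mul_row_diag_block => /eq_row_mx [-> ->].
  by rewrite !submxMl.
by rewrite -mul_row_diag_block submxMl.
Qed.

Lemma transverse_sub_eq0 m (P Q : 'M[R]_m) (x : 'rV[R]_m) :
  transverse P Q -> (x <= P)%MS -> (x <= Q)%MS -> x = 0.
Proof.
move=> /eqP; rewrite mxrank_eq0 => /eqP PQ0 xP xQ; apply/eqP.
by rewrite -submx0 -PQ0 sub_capmx xP xQ.
Qed.

End DiagonalBlocks.

Section MaslovForm.
Variables (R : realType) (n : nat) (Om : 'M[R]_(n + n)).
Local Notation m := (n + n).
Local Notation omega := (omega Om).
Implicit Types (x y : 'rV[R]_m) (w : 'rV[R]_(m + (m + m))).

Definition pr1mx : 'M[R]_(m + (m + m), m) := col_mx 1%:M 0.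
Definition pr2mx : 'M[R]_(m + (m + m), m) := col_mx 0 (col_mx 1%:M 0).
Definition pr3mx : 'M[R]_(m + (m + m), m) := col_mx 0 (col_mx 0 1%:M).

Lemma pr1mxE w : w *m pr1mx = lsubmx w.
Proof. by rewrite -{1}(hsubmxK w) mul_row_col mulmx1 mulmx0 addr0. Qed.

Lemma pr2mxE w : w *m pr2mx = lsubmx (rsubmx w).
Proof.
rewrite -{1}(hsubmxK w) mul_row_col mulmx0 add0r.
by rewrite -{1}(hsubmxK (rsubmx w)) mul_row_col mulmx1 mulmx0 addr0.
Qed.

Lemma pr3mxE w : w *m pr3mx = rsubmx (rsubmx w).
Proof.
rewrite -{1}(hsubmxK w) mul_row_col mulmx0 add0r.
by rewrite -{1}(hsubmxK (rsubmx w)) mul_row_col mulmx1 mulmx0 add0r.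
Qed.

Definition maslov_mx : 'M[R]_(m + (m + m)) :=
  pr1mx *m Om *m pr2mx^T + pr2mx *m Om *m pr3mx^T + pr3mx *m Om *m pr1mx^T.

Lemma maslov_mx_bilinear w w' :
  (w *m maslov_mx *m w'^T) 0 0 = omega (lsubmx w) (lsubmx (rsubmx w'))
    + omega (lsubmx (rsubmx w)) (rsubmx (rsubmx w')) + omega (rsubmx (rsubmx w)) (lsubmx w').
Proof.
have pr_omega (A B : 'M[R]_(m + (m + m), m)) :
    (w *m (A *m Om *m B^T) *m w'^T) 0 0 = omega (w *m A) (w' *m B).
  by rewrite /Defs.omega trmx_mul !mulmxA.
have entryD (A B : 'M[R]_1) : (A + B) 0 0 = A 0 0 + B 0 0 by rewrite mxE.
by rewrite /maslov_mx !mulmxDr !mulmxDl !entryD !pr_omega !pr1mxE !pr2mxE !pr3mxE.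
Qed.

Lemma maslov_form_qf : maslov_form Om = qf maslov_mx.
Proof. by apply/funext => w; rewrite /qf maslov_mx_bilinear. Qed.

Lemma bf_maslov x1 x2 x3 y1 y2 y3 :
  bf maslov_mx (row_mx x1 (row_mx x2 x3)) (row_mx y1 (row_mx y2 y3)) =
  omega x1 y2 + omega x2 y3 + omega x3 y1 + (omega y1 x2 + omega y2 x3 + omega y3 x1).
Proof. by rewrite bfE !maslov_mx_bilinear !(row_mxKl, row_mxKr). Qed.

Lemma maslov_radical_sub (L1 L2 L3 : 'M[R]_m) x1 x2 x3 :
  symplectic_form Om -> lagproj Om L1 -> lagproj Om L2 -> lagproj Om L3 ->
  (forall y1 y2 y3, (y1 <= L1)%MS -> (y2 <= L2)%MS -> (y3 <= L3)%MS ->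
     bf maslov_mx (row_mx x1 (row_mx x2 x3)) (row_mx y1 (row_mx y2 y3)) = 0) ->
  [/\ (x2 - x3 <= L1)%MS, (x3 - x1 <= L2)%MS & (x1 - x2 <= L3)%MS].
Proof.
move=> [OmT Omu] l1 l2 l3 rad.
have om y x x' : omega y (x - x') = omega y x + omega x' y.
  by rewrite omegaBr (omegaC OmT x' y).
split; apply: (lagrangian_omega_orthogonal OmT Omu) => // y yL; rewrite om.
- by have := rad y 0 0 yL (sub0mx _ _) (sub0mx _ _); rewrite bf_maslov !omega0r !omega0l; lra.
- by have := rad 0 y 0 (sub0mx _ _) yL (sub0mx _ _); rewrite bf_maslov !omega0r !omega0l; lra.
- by have := rad 0 0 y (sub0mx _ _) (sub0mx _ _) yL; rewrite bf_maslov !omega0r !omega0l; lra.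
Qed.

End MaslovForm.

Lemma transverse_cycle_eq0 (R : realType) (m : nat) (L1 L2 L3 : 'M[R]_m)
    (x1 x2 x3 : 'rV[R]_m) :
  transverse L1 L2 -> transverse L2 L3 -> transverse L1 L3 ->
  (x1 <= L1)%MS -> (x2 <= L2)%MS -> (x3 <= L3)%MS ->
  (x2 - x3 <= L1)%MS -> (x3 - x1 <= L2)%MS -> (x1 - x2 <= L3)%MS ->
  [/\ x1 = 0, x2 = 0 & x3 = 0].
Proof.
move=> t12 t23 t13 x1L x2L x3L d1 d2 d3.
have subN (x : 'rV[R]_m) (L : 'M[R]_m) : (x <= L)%MS -> (- x <= L)%MS.
  by move=> xL; rewrite -scaleN1r scalemx_sub.
have e13 : x1 - x2 + x3 = 0.
  apply: (transverse_sub_eq0 t13); last by rewrite addrC addmx_sub.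
  rewrite (_ : x1 - x2 + x3 = x1 - (x2 - x3)); last by rewrite opprB addrA addrAC.
  by rewrite addmx_sub ?subN.
have e23 : x2 + x3 - x1 = 0.
  apply: (transverse_sub_eq0 t23); first by rewrite -addrA addmx_sub.
  rewrite (_ : x2 + x3 - x1 = x3 - (x1 - x2)); last by rewrite opprB addrA (addrC x3).
  by rewrite addmx_sub ?subN.
have x30 : x3 = 0.
  apply/matrixP => i j; move/matrixP/(_ i j): e13; move/matrixP/(_ i j): e23.
  rewrite !mxE; lra.
have x20 : x2 = 0 by apply: (transverse_sub_eq0 t12) => //; rewrite -(subr0 x2) -x30.
by split => //; move: e13; rewrite x20 x30 subr0 addr0.
Qed.

Section MaslovNondegenerate.
Variables (R : realType) (n : nat) (Om : 'M[R]_(n + n)) (L1 L2 L3 : 'M[R]_(n + n)).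
Hypotheses (Om_sympl : symplectic_form Om)
  (l1 : lagproj Om L1) (l2 : lagproj Om L2) (l3 : lagproj Om L3)
  (t12 : transverse L1 L2) (t23 : transverse L2 L3) (t13 : transverse L1 L3).

Lemma maslov_nondeg : nondeg_on (maslov_mx Om) (block_mx L1 0 0 (block_mx L2 0 0 L3)).
Proof.
move=> w; rewrite -(hsubmxK w) -(hsubmxK (rsubmx w)).
move: (lsubmx w) (lsubmx (rsubmx w)) (rsubmx (rsubmx w)) => x1 x2 x3.
rewrite !row_mx_sub_diag_block => /and3P [x1L x2L x3L] rad.
have [] := @maslov_radical_sub _ _ _ L1 L2 L3 x1 x2 x3 Om_sympl l1 l2 l3.
  move=> y1 y2 y3 y1L y2L y3L; apply: rad.
  by rewrite !row_mx_sub_diag_block y1L y2L y3L.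
move=> d1 d2 d3; have [-> -> ->] := transverse_cycle_eq0 t12 t23 t13 x1L x2L x3L d1 d2 d3.
by rewrite !row_mx0.
Qed.

Lemma betan_locally_constant :
  exists2 d : R, 0 < d & forall P1 P2 P3 : 'M[R]_(n + n),
    lagproj Om P1 -> lagproj Om P2 -> lagproj Om P3 ->
    mxdist P1 L1 < d -> mxdist P2 L2 < d -> mxdist P3 L3 < d ->
    betan Om P1 P2 P3 = betan Om L1 L2 L3.
Proof.
set W := block_mx L1 0 0 (block_mx L2 0 0 L3).
have WW : W *m W = W.
  by rewrite !mul_diag_block; case: l1 => _ -> _ _; case: l2 => _ -> _ _; case: l3 => _ -> _ _.
have [d d0 dW] := signature_locally_constant WW maslov_nondeg.
exists (d / 3); first exact: divr_gt0.
move=> P1 P2 P3 [_ _ rP1 _] [_ _ rP2 _] [_ _ rP3 _] h1 h2 h3.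
rewrite /betan maslov_form_qf; apply: dW; last first.
  by rewrite !rank_diag_block_mx rP1 rP2 rP3; case: l1 => _ _ -> _; case: l2 => _ _ -> _;
    case: l3 => _ _ -> _.
rewrite /W !opp_block_mx !add_block_mx !oppr0 !addr0 !l1norm_diag_block -!mxdistE.
have -> : d = d / 3 + d / 3 + d / 3 by field.
by rewrite addrA !ltrD.
Qed.

End MaslovNondegenerate.

(** * Orientation of triples on the circle *)

Section CircleOrientation.
Variable R : realType.
Implicit Types a b t x y : R.

Lemma pt_eq a b : pt a = pt b <-> cos a = cos b /\ sin a = sin b.
Proof. by rewrite /pt; split => [[-> ->]|[-> ->]]. Qed.

Lemma sin_cos_addz2pi a (k : int) :
  sin (a + 2 * pi * k%:~R) = sin a /\ cos (a + 2 * pi * k%:~R) = cos a.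
Proof.
case: k => j.
  have -> : 2 * pi * (Posz j)%:~R = (pi *+ 2) *+ j :> R.
    by rewrite -[RHS]mulr_natr -pmulrn; ring.
  by rewrite (periodicn (@sinD2pi R)) (periodicn (@cosD2pi R)).
set b := a + 2 * pi * (Negz j)%:~R.
have -> : a = b + (pi *+ 2) *+ j.+1.
  by rewrite /b NegzE mulrNz -[X in _ = _ + X]mulr_natr -pmulrn; ring.
by rewrite (periodicn (@sinD2pi R)) (periodicn (@cosD2pi R)) -/b.
Qed.

Lemma sin_cos_angmod x : sin (angmod x) = sin x /\ cos (angmod x) = cos x.
Proof.
have := sin_cos_addz2pi (angmod x) (Num.floor (x / (2 * pi))).
have -> : angmod x + 2 * pi * (Num.floor (x / (2 * pi)))%:~R = x.
  by rewrite /angmod subrK.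
by move=> [-> ->].
Qed.

Lemma angmod_itv x : 0 <= angmod x < 2 * pi.
Proof.
have p0 : 0 < 2 * pi :> R by rewrite mulr_gt0 ?pi_gt0.
have := floor_le (x / (2 * pi)); have := floorD1_gt (x / (2 * pi)).
rewrite /angmod intrD; set k := (Num.floor _)%:~R => ltk lek.
apply/andP; split; first by rewrite subr_ge0 mulrC -ler_pdivlMr.
have -> : x - 2 * pi * k = 2 * pi - ((k + 1) * (2 * pi) - x) by ring.
by rewrite ltrBlDr ltrDl subr_gt0 -ltr_pdivrMr.
Qed.

Lemma pt_angmod t1 t2 : pt t2 = pt (t1 + angmod (t2 - t1)).
Proof.
have [s c] := sin_cos_angmod (t2 - t1).
by apply/pt_eq; rewrite sinD cosD s c -sinD -cosD addrC subrK.
Qed.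

(* Twice the signed area of the triangle with vertices [pt t1], [pt t2], [pt t3]. *)
Definition orient t1 t2 t3 : R := sin (t2 - t1) + sin (t3 - t2) + sin (t1 - t3).

Lemma orientE t1 t2 t3 : orient t1 t2 t3 =
  (sin t2 * cos t1 - cos t2 * sin t1) + (sin t3 * cos t2 - cos t3 * sin t2)
  + (sin t1 * cos t3 - cos t1 * sin t3).
Proof. by rewrite /orient !sinB. Qed.

Lemma orient_degenerate t1 t2 t3 :
  pt t1 = pt t2 \/ pt t2 = pt t3 \/ pt t1 = pt t3 -> orient t1 t2 t3 = 0.
Proof.
by rewrite orientE; case=> [/pt_eq [-> ->]|[/pt_eq [-> ->]|/pt_eq [-> ->]]]; ring.
Qed.

Lemma orient_half_angles t1 t2 t3 : orient t1 t2 t3 =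
  4 * sin ((angmod (t2 - t1) - 0) / 2) * sin ((angmod (t3 - t1) - 0) / 2)
    * sin ((angmod (t3 - t1) - angmod (t2 - t1)) / 2).
Proof.
have [sa ca] := sin_cos_angmod (t2 - t1); have [sb cb] := sin_cos_angmod (t3 - t1).
move: (angmod (t2 - t1)) (angmod (t3 - t1)) sa ca sb cb => a b sa ca sb cb.
have -> : orient t1 t2 t3 = sin a - sin b + sin (b - a).
  rewrite /orient (_ : t3 - t2 = (t3 - t1) - (t2 - t1)); last by ring.
  rewrite (_ : t1 - t3 = - (t3 - t1)); last by ring.
  by rewrite sinN (sinB (t3 - t1)) (sinB b) sa ca sb cb; ring.
rewrite !subr0 mulrBl {1 2}[a]splitr {1 2}[b]splitr; move: (a / 2) (b / 2) => x y.
rewrite !sinB !sinD !cosD; apply/eqP; rewrite -subr_eq0; apply/eqP.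
transitivity (2 * sin x * cos x * (1 - (cos y ^+ 2 + sin y ^+ 2))
  - 2 * sin y * cos y * (1 - (cos x ^+ 2 + sin x ^+ 2))); first ring.
by rewrite !cos2Dsin2 !subrr !mulr0 subrr.
Qed.

Lemma sin_half_sub_gt0 a b : 0 <= a -> b < 2 * pi -> a < b -> 0 < sin ((b - a) / 2).
Proof.
move=> a0 b2 ab; apply: sin_gt0_pi.
rewrite divr_gt0 ?subr_gt0 //= ltr_pdivrMr // mulrC ltrBlDr.
by apply: lt_le_trans b2 _; rewrite lerDl.
Qed.

Lemma beta1_sgz_orient t1 t2 t3 : beta1 t1 t2 t3 = sgz (orient t1 t2 t3).
Proof.
rewrite /beta1; case: and3P => [[/eqP d12 /eqP d23 /eqP d13]|nd]; last first.
  rewrite orient_degenerate ?sgz0 //.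
  by apply: contrapT => /not_orP [/eqP n12 /not_orP [/eqP n23 /eqP n13]]; apply: nd.
rewrite orient_half_angles.
set a := angmod (t2 - t1); set b := angmod (t3 - t1).
have /andP [a0 a2] := angmod_itv (t2 - t1); have /andP [b0 b2] := angmod_itv (t3 - t1).
have a_pos : 0 < a.
  by rewrite lt_def a0 andbT; apply: contra_notN d12 => /eqP a00; rewrite (pt_angmod t1 t2) -/a a00 addr0.
have b_pos : 0 < b.
  by rewrite lt_def b0 andbT; apply: contra_notN d13 => /eqP b00; rewrite (pt_angmod t1 t3) -/b b00 addr0.
have ab : a != b.
  by apply: contra_notN d23 => /eqP ab; rewrite (pt_angmod t1 t2) (pt_angmod t1 t3) -/a -/b ab.
have sa := sin_half_sub_gt0 (lexx 0) a2 a_pos; have sb := sin_half_sub_gt0 (lexx 0) b2 b_pos.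
have [lt_ab|lt_ba] := ltP a b.
  by rewrite gtr0_sgz // !mulr_gt0 // sin_half_sub_gt0.
rewrite ltr0_sgz // pmulr_rlt0 ?mulr_gt0 // -oppr_gt0 -sinN -mulNr opprB.
by rewrite sin_half_sub_gt0 // lt_neqAle eq_sym ab.
Qed.

End CircleOrientation.

Section OrientationContinuity.
Variable R : realType.
Implicit Types a b t s e : R.

Lemma sgz_eq_of_dist_lt a b : `|a - b| < `|b| -> sgz a = sgz b.
Proof.
have := ler_norm (a - b); have := ler_norm (b - a); rewrite distrC => h1 h2 h.
case: (ltrgt0P b) => b0.
- have a0 : 0 < a by move: h; rewrite (gtr0_norm b0); lra.
  by rewrite !gtr0_sgz.
- have a0 : a < 0 by move: h; rewrite (ltr0_norm b0); lra.
  by rewrite !ltr0_sgz.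
- by move: h; rewrite b0 normr0 ltNge normr_ge0.
Qed.

Lemma cdist2_pt_le t s e : 0 < e -> cdist2 (pt s) (pt t) < e ^+ 2 ->
  `|cos s - cos t| <= e /\ `|sin s - sin t| <= e.
Proof.
move=> e0; rewrite /cdist2 /= => d2.
have le_of_sqr x : x ^+ 2 < e ^+ 2 -> `|x| <= e.
  move=> /ltW; rewrite -[x ^+ 2]real_normK ?num_real //.
  by rewrite ler_pXn2r // nnegrE ltW.
by split; apply: le_of_sqr; apply: le_lt_trans d2; rewrite ?lerDl ?lerDr sqr_ge0.
Qed.

Lemma sin_sub_dist_le a b a' b' e :
  `|cos a' - cos a| <= e -> `|sin a' - sin a| <= e ->
  `|cos b' - cos b| <= e -> `|sin b' - sin b| <= e ->
  `|sin (b' - a') - sin (b - a)| <= e *+ 4.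
Proof.
have prod_dist x x' y y' : `|x' - x| <= e -> `|y' - y| <= e ->
    `|x| <= 1 -> `|y'| <= 1 -> `|x' * y' - x * y| <= e *+ 2.
  move=> dx dy x1 y1; have -> : x' * y' - x * y = (x' - x) * y' + x * (y' - y) by ring.
  apply: le_trans (ler_normD _ _) _; rewrite mulr2n !normrM.
  by apply: lerD; [rewrite -[e]mulr1 | rewrite -[e]mul1r]; apply: ler_pM.
move=> ca sa cb sb; rewrite !sinB.
have -> : sin b' * cos a' - cos b' * sin a' - (sin b * cos a - cos b * sin a)
  = (sin b' * cos a' - sin b * cos a) - (cos b' * sin a' - cos b * sin a) by ring.
apply: le_trans (ler_normB _ _) _; rewrite (_ : 4 = 2 + 2)%N // mulrnDr.
by apply: lerD; apply: prod_dist => //; rewrite ?sin_max ?cos_max.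
Qed.

Lemma orient_dist_le t1 t2 t3 s1 s2 s3 e :
  `|cos s1 - cos t1| <= e -> `|sin s1 - sin t1| <= e ->
  `|cos s2 - cos t2| <= e -> `|sin s2 - sin t2| <= e ->
  `|cos s3 - cos t3| <= e -> `|sin s3 - sin t3| <= e ->
  `|orient s1 s2 s3 - orient t1 t2 t3| <= e *+ 12.
Proof.
move=> c1 z1 c2 z2 c3 z3; rewrite /orient.
have -> : sin (s2 - s1) + sin (s3 - s2) + sin (s1 - s3) -
          (sin (t2 - t1) + sin (t3 - t2) + sin (t1 - t3)) =
   (sin (s2 - s1) - sin (t2 - t1)) + (sin (s3 - s2) - sin (t3 - t2))
   + (sin (s1 - s3) - sin (t1 - t3)) by ring.
rewrite (_ : 12 = 4 + 4 + 4)%N // !mulrnDr.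
apply: le_trans (ler_normD _ _) _; apply: lerD; last exact: sin_sub_dist_le.
by apply: le_trans (ler_normD _ _) _; apply: lerD; exact: sin_sub_dist_le.
Qed.

Lemma beta1_locally_constant t1 t2 t3 :
  pt t1 <> pt t2 -> pt t2 <> pt t3 -> pt t1 <> pt t3 ->
  exists2 e, 0 < e & forall s1 s2 s3,
    cdist2 (pt s1) (pt t1) < e -> cdist2 (pt s2) (pt t2) < e ->
    cdist2 (pt s3) (pt t3) < e -> beta1 s1 s2 s3 = beta1 t1 t2 t3.
Proof.
move=> d12 d23 d13; rewrite beta1_sgz_orient; set D := orient t1 t2 t3.
have D0 : 0 < `|D|.
  rewrite normr_gt0 -sgz_eq0 -beta1_sgz_orient /beta1.
  by case: and3P => [_|[]]; [case: ifP | split; apply/eqP].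
exists ((`|D| / 13) ^+ 2); first by rewrite exprn_gt0 // divr_gt0.
move=> s1 s2 s3 /cdist2_pt_le-/(_ (divr_gt0 D0 _)) [//|c1 z1].
move=> /cdist2_pt_le-/(_ (divr_gt0 D0 _)) [//|c2 z2].
move=> /cdist2_pt_le-/(_ (divr_gt0 D0 _)) [//|c3 z3].
rewrite beta1_sgz_orient; apply: sgz_eq_of_dist_lt.
apply: le_lt_trans (orient_dist_le c1 z1 c2 z2 c3 z3) _.
by rewrite -mulr_natr; lra.
Qed.

End OrientationContinuity.

(** * The essential graph *)

Section EssentialGraph.
Variable R : realType.

Lemma measurable_fun_lt (f : R -> R) (e : R) : measurable_fun setT f ->
  measurable [set t | f t < e].
Proof.
move=> mf; have := mf measurableT _ (measurable_itv `]-oo, e[%R).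
by rewrite setTI; congr measurable; apply/seteqP; split => x /=; rewrite in_itv.
Qed.

Lemma measurable_cdist2_pt (t0 : R) :
  measurable_fun setT (fun t : R => cdist2 (pt t) (pt t0)).
Proof.
apply: measurable_funD; apply: measurable_funX; apply: measurable_funB => //;
  apply: continuous_measurable_fun; [exact: continuous_cos | exact: continuous_sin].
Qed.

Lemma measurable_mxdist (m : nat) (phi : R -> 'M[R]_m) (L : 'M[R]_m) :
  measurable_lagmap phi -> measurable_fun setT (fun t => mxdist (phi t) L).
Proof.
move=> mphi; apply: measurable_sum => i; apply: measurable_sum => j.
by apply: measurableT_comp; [exact: normr_measurable | apply: measurable_funB].
Qed.

Definition graph_nbhs (m : nat) (phi : R -> 'M[R]_m) (t0 : R) (L : 'M[R]_m) (e : R) :=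
  [set t | cdist2 (pt t) (pt t0) < e /\ mxdist (phi t) L < e].

Lemma measurable_graph_nbhs (m : nat) (phi : R -> 'M[R]_m) t0 L e :
  measurable_lagmap phi -> measurable (graph_nbhs phi t0 L e).
Proof.
move=> mphi; rewrite (_ : graph_nbhs _ _ _ _ = [set t | cdist2 (pt t) (pt t0) < e]
  `&` [set t | mxdist (phi t) L < e]) //.
by apply: measurableI; apply: measurable_fun_lt;
  [exact: measurable_cdist2_pt | exact: measurable_mxdist].
Qed.

Lemma essgraph_triple (m : nat) (phi : R -> 'M[R]_m) (Z : set ((R * R) * R))
    (t1 t2 t3 : R) (L1 L2 L3 : 'M[R]_m) (e : R) :
  measurable_lagmap phi -> ((lam R \x lam R) \x lam R)%E.-negligible Z ->
  in_essgraph phi t1 L1 -> in_essgraph phi t2 L2 -> in_essgraph phi t3 L3 ->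
  0 < e -> exists s1 s2 s3 : R, [/\ ~ Z ((s1, s2), s3),
    graph_nbhs phi t1 L1 e s1, graph_nbhs phi t2 L2 e s2 & graph_nbhs phi t3 L3 e s3].
Proof.
move=> mphi [M [mM M0 ZM]] g1 g2 g3 e0.
pose U t0 L := graph_nbhs phi t0 L e.
have mU t0 L : measurable (U t0 L) by exact: measurable_graph_nbhs.
have mU12 : measurable (U t1 L1 `*` U t2 L2) by exact: measurableX.
have Upos : (0 < ((lam R \x lam R) \x lam R) ((U t1 L1 `*` U t2 L2) `*` U t3 L3))%E.
  rewrite /lam (product_measure1E (lebesgue_measure \x lebesgue_measure)%E
    lebesgue_measure mU12 (mU t3 L3)).
  apply: mule_gt0; last exact: g3.
  have := mule_gt0 (g1 _ e0) (g2 _ e0).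
  by rewrite -(product_measure1E lebesgue_measure lebesgue_measure (mU t1 L1) (mU t2 L2)).
have [p [Up nMp]] : exists p, ((U t1 L1 `*` U t2 L2) `*` U t3 L3) p /\ ~ M p.
  apply: contrapT => noU.
  have UM : (U t1 L1 `*` U t2 L2) `*` U t3 L3 `<=` M.
    by move=> p Up; apply: contrapT => nMp; apply: noU; exists p.
  have mU123 : measurable ((U t1 L1 `*` U t2 L2) `*` U t3 L3) by exact: measurableX.
  have : (0 < ((lam R \x lam R) \x lam R)%E M)%E.
    exact: lt_le_trans Upos (le_measure ((lebesgue_measure \x lebesgue_measure) \x lebesgue_measure)%E (mem_set mU123) (mem_set mM) UM).
  by rewrite M0 ltxx.
case: p Up nMp => [[s1 s2] s3] [[/= U1 U2] U3] nMp.
by exists s1, s2, s3; split => // /ZM.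
Qed.

End EssentialGraph.

Unset Implicit Arguments.

Theorem lemma8p3 (R : realType) (n : nat) (Om : 'M[R]_(n + n))
  (G : set 'M[R[i]]_2) (rho : 'M[R[i]]_2 -> 'M[R]_(n + n))
  (phi : R -> 'M[R]_(n + n)) :
  symplectic_form Om ->
  torsionfree_cocompact_lattice_PU11 G ->
  (* rho : Gamma -> Sp(V) homomorphism (factoring through G/{+-1}) *)
  (forall g, G g -> Sp Om (rho g)) ->
  (forall g h, G g -> G h -> rho (g * h) = rho g *m rho h) ->
  (forall g, G g -> rho (- g) = rho g) ->
  (* phi : S^1 -> L(V) measurable *)
  (forall t, phi (t + 2 * pi) = phi t) ->
  (forall t, lagproj Om (phi t)) ->
  measurable_lagmap phi ->
  (* rho-equivariance (almost everywhere, for each gamma) *)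
  (forall g, G g -> (lam R).-negligible
     [set t | ~ (forall t', pt t' = mob g (pt t) ->
                   (phi t' == phi t *m (rho g)^T)%MS)]) ->
  (* (i) *)
  (((lam R \x lam R) \x lam R)%E).-negligible
     [set t | betan Om (phi t.1.1) (phi t.1.2) (phi t.2)
              <> n%:Z * beta1 t.1.1 t.1.2 t.2] ->
  (* (ii) *)
  (forall L, lagproj Om L ->
     (lam R).-negligible [set t | \rank (phi t :&: L)%MS <> 0%N]) ->
  forall (t1 t2 t3 : R) (L1 L2 L3 : 'M[R]_(n + n)),
    lagproj Om L1 -> lagproj Om L2 -> lagproj Om L3 ->
    in_essgraph phi t1 L1 -> in_essgraph phi t2 L2 -> in_essgraph phi t3 L3 ->
    pt t1 <> pt t2 -> pt t2 <> pt t3 -> pt t1 <> pt t3 ->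
    transverse L1 L2 -> transverse L2 L3 -> transverse L1 L3 ->
    betan Om L1 L2 L3 = n%:Z * beta1 t1 t2 t3.
Proof.
move=> Om_sympl _ _ _ _ _ lag_phi mphi _ betan_ae _ t1 t2 t3 L1 L2 L3 l1 l2 l3
  g1 g2 g3 d12 d23 d13 t12 t23 t13.
have [d d0 betan_near] := betan_locally_constant Om_sympl l1 l2 l3 t12 t23 t13.
have [e e0 beta1_near] := beta1_locally_constant d12 d23 d13.
have de0 : 0 < Num.min d e by rewrite lt_min d0 e0.
have lt_d x : x < Num.min d e -> x < d by rewrite lt_min => /andP [].
have lt_e x : x < Num.min d e -> x < e by rewrite lt_min => /andP [].
have [s1 [s2 [s3 [betan_s [c1 m1] [c2 m2] [c3 m3]]]]] :=
  essgraph_triple mphi betan_ae g1 g2 g3 de0.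
rewrite -(betan_near (phi s1) (phi s2) (phi s3)) ?lag_phi ?lt_d //.
by rewrite -(beta1_near s1 s2 s3) ?lt_e //; apply: contrapT betan_s.
Qed.
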